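(* Fix an integer $n\geq3$ and run the $n$-GHZ state generation protocol (described in the context). Suppose the protocol heralds success. If all input photons have the ideal internal state $|\psi_0\rangle$, then the output state on modes $0,\dots,2n-1$ is $|B_+\rangle=\frac1{\sqrt2}\left(|1,0\rangle^{\otimes n}+|0,1\rangle^{\otimes n}\right)$ (with all photons in internal state $|\psi_0\rangle$), where the $j$-th factor refers to modes $(2j,2j+1)$.
   Context: Photonic model: photons occupy spatial modes and carry internal states; linear optics acts on spatial modes; photon-number-resolving (PNR) detection reveals only photon number per spatial mode. Hadamard beamsplitter $H$ on ordered pair $(p,q)$: $a_p^\dagger\mapsto(a_p^\dagger+a_q^\dagger)/\sqrt2$, $a_q^\dagger\mapsto(a_p^\dagger-a_q^\dagger)/\sqrt2$. The $n$-GHZ state analyzer on $2n$ modes labeled $0,\dots,2n-1$: apply $H$ to each ordered pair in $\{(1,2),(3,4),\dots,(2n-3,2n-2),(2n-1,0)\}$, PNR-measure all modes getting $(m_0,\dots,m_{2n-1})$, succeed iff $m_{2i+1}+m_{2i+2}=1$ for all $0\le i<n$ ($m_{2n}=m_0$); it reports the value $(-1)^{s_{\mathrm{odd}}}$ for $X_0\cdots X_{n-1}$, where $s_{\mathrm{odd}}$ is the number of photons detected in its odd-indexed modes. The $n$-GHZ generation protocol on $4n$ modes $0,\dots,4n-1$: (1) input $|1\rangle^{\otimes 2n}\otimes|0\rangle^{\otimes 2n}$; (2) apply $H$ on each pair $(2i,2i+1)$, $0\le i<n$; (3) apply $H$ on each pair $(i,2n+i)$, $0\le i<2n$; (4) apply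 the $n$-GHZ state analyzer to modes $2n,\dots,4n-1$ (mode $2n+j$ playing the role of analyzer mode $j$), proceeding iff it heralds success; (5) if the analyzer reports $X\cdots X=-1$, apply a phase $-1$ to mode $1$. The output consists of modes $0,\dots,2n-1$. *)

From HB Require Import structures.
From mathcomp Require Import all_boot all_order all_algebra all_field.
From mathcomp Require Import mpoly.
Unset Printing Implicit Defensive.
Import Order.TTheory GRing.Theory Num.Theory.
Local Open Scope ring_scope.

(* Second-quantized representation: a (finite-photon) state on N spatial modes,
   all photons in the same internal state psi0, is  P(a_0^+,...,a_{N-1}^+)|vac>
   for a polynomial P in N commuting variables; we identify the state with P.
   (Fock state |m> = prod_i (a_i^+)^{m_i}/sqrt(m_i!) |vac>.) *)
Definition state (N : nat) := {mpoly algC[N]}.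

(* creation operator of mode i (0 if i is out of range) *)
Definition var (N i : nat) : state N :=
  if insub i is Some j then 'X_j else 0.

Definition s2 : algC := sqrtC 2%:R.

(* Hadamard beamsplitter on ordered pair (p,q):
   a_p^+ |-> (a_p^+ + a_q^+)/sqrt2, a_q^+ |-> (a_p^+ - a_q^+)/sqrt2.
   On P(a^+)|vac> it acts by substituting these images into P. *)
Definition hbs_sub (N p q : nat) : N.-tuple (state N) :=
  [tuple (if val i == p then s2^-1 *: (var N p + var N q)
          else if val i == q then s2^-1 *: (var N p - var N q)
          else 'X_i) | i < N].

Definition hbs (N p q : nat) (P : state N) : state N := P \mPo hbs_sub N p q.

Definition apply_hbs (N : nat) (l : seq (nat * nat)) (P : state N) : state N :=
  foldl (fun P pq => hbs N pq.1 pq.2 P) P l.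

Definition phase_flip (N r : nat) (P : state N) : state N :=
  P \mPo [tuple (if val i == r then - var N r else 'X_i) | i < N].

Definition NN (n : nat) : nat := (4 * n)%N.

Definition input_state (n : nat) : state (NN n) :=
  \prod_(i < 2 * n) var (NN n) i.

Definition step2_pairs (n : nat) : seq (nat * nat) :=
  mkseq (fun i => (2 * i, 2 * i + 1)%N) n.
Definition step3_pairs (n : nat) : seq (nat * nat) :=
  mkseq (fun i => (i, 2 * n + i)%N) (2 * n).
(* analyzer pairs (1,2),(3,4),...,(2n-3,2n-2),(2n-1,0), with analyzer mode j
   being global mode 2n+j *)
Definition analyzer_pairs (n : nat) : seq (nat * nat) :=
  mkseq (fun i => (2 * n + (2 * i + 1), 2 * n + (2 * i + 2) %% (2 * n))%N) n.

Definition pre_measurement (n : nat) : state (NN n) :=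
  apply_hbs (NN n) (analyzer_pairs n)
    (apply_hbs (NN n) (step3_pairs n) (apply_hbs (NN n) (step2_pairs n) (input_state n))).

(* PNR outcome k: k j = photon number in analyzer mode j (global mode 2n+j),
   for j < 2n.  The (unnormalized) post-measurement state of modes 0..2n-1
   (up to the positive constant sqrt(prod_j k_j!)) is obtained by keeping the
   monomials whose exponents on modes 2n..4n-1 match k and deleting those
   variables. *)
Definition measure_high (n : nat) (k : nat -> nat) (P : state (NN n)) : state (NN n) :=
  \sum_(m <- msupp P | [forall j : 'I_(NN n),
                          (2 * n <= j)%N ==> (m j == k (j - 2 * n)%N)])
     P@_m *: 'X_[[multinom (if (i < 2 * n)%N then m i else 0%N) | i < NN n]].

Definition analyzer_success (n : nat) (k : nat -> nat) : Prop :=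
  forall i, (i < n)%N -> (k (2 * i + 1) + k ((2 * i + 2) %% (2 * n)))%N = 1%N.

Definition s_odd (n : nat) (k : nat -> nat) : nat :=
  (\sum_(j < 2 * n | odd j) k j)%N.

Definition protocol_output (n : nat) (k : nat -> nat) : state (NN n) :=
  let Q := measure_high n k (pre_measurement n) in
  if odd (s_odd n k) then phase_flip (NN n) 1 Q else Q.

Definition B_plus (n : nat) : state (NN n) :=
  s2^-1 *: (\prod_(j < n) var (NN n) (2 * j) + \prod_(j < n) var (NN n) (2 * j + 1)).

From HB Require Import structures.
From mathcomp Require Import all_boot all_order all_algebra all_field.
From mathcomp Require Import mpoly.
From mathcomp Require Import zify ring.
Import GRing.Theory Num.Theory.
Local Open Scope ring_scope.

(* Since all photons share one internal state, a state is a polynomial in the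
   creation operators and every linear-optical step is an algebra morphism (a
   linear substitution of the variables). The network maps a_{2i} a_{2i+1} to
   s2^-4 ((x_i + u_i)^2 - (y_i + v_i)^2), where x_i, y_i are the output modes of
   pair i, v_i is a combination of the two modes of analyzer beamsplitter i and
   u_i one of those of analyzer beamsplitter i - 1. Grade detector monomials by
   the number of photons in each analyzer pair: heralded success means one
   photon per pair, and propagating this around the cycle of pairs shows that
   every factor must contribute the same cross term, either all x_i u_i or all
   y_i v_i. Both surviving products are products of linear forms on disjoint
   pairs of detector modes, so the PNR outcome selects one coefficient per pair;
   the two branches then differ by the sign (-1)^s_odd, which the phase flip on
   mode 1 removes. *)

Section Beamsplitters.
Variable N : nat.
Implicit Types (P : state N) (l : seq (nat * nat)).

Lemma var_ord {j} (hj : (j < N)%N) : var N j = 'X_(Ordinal hj).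
Proof. by rewrite /var insubT. Qed.

Lemma var_out j : (N <= j)%N -> var N j = 0.
Proof. by move=> hj; rewrite /var insubF // ltnNge hj. Qed.

Lemma apply_hbs_cons p q l P : apply_hbs N ((p, q) :: l) P = apply_hbs N l (hbs N p q P).
Proof. by []. Qed.

Lemma apply_hbs_cat l1 l2 P :
  apply_hbs N (l1 ++ l2) P = apply_hbs N l2 (apply_hbs N l1 P).
Proof. exact: foldl_cat. Qed.

Lemma apply_hbs_is_nmod_morphism l : nmod_morphism (apply_hbs N l).
Proof.
elim: l => [|[p q] l IHl] //; split=> [|P Q]; rewrite !apply_hbs_cons /hbs.
  by rewrite raddf0 IHl.1.
by rewrite raddfD IHl.2.
Qed.

HB.instance Definition _ l :=
  GRing.isNmodMorphism.Build (state N) (state N) (apply_hbs N l)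
    (apply_hbs_is_nmod_morphism l).

Lemma apply_hbs_is_monoid_morphism l : monoid_morphism (apply_hbs N l).
Proof.
elim: l => [|[p q] l IHl] //; split=> [|P Q]; rewrite !apply_hbs_cons /hbs.
  by rewrite rmorph1 IHl.1.
by rewrite rmorphM IHl.2.
Qed.

HB.instance Definition _ l :=
  GRing.isMonoidMorphism.Build (state N) (state N) (apply_hbs N l)
    (apply_hbs_is_monoid_morphism l).

Lemma apply_hbs_is_scalable l : scalable (apply_hbs N l).
Proof.
by elim: l => [|[p q] l IHl] // c P; rewrite !apply_hbs_cons /hbs linearZ IHl.
Qed.

HB.instance Definition _ l :=
  GRing.isScalable.Build algC (state N) (state N) *:%R (apply_hbs N l)
    (apply_hbs_is_scalable l).

Lemma apply_hbsZ l c P : apply_hbs N l (c *: P) = c *: apply_hbs N l P.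
Proof. exact: linearZ. Qed.

Lemma hbs_var p q j : (j < N)%N -> hbs N p q (var N j) =
  if j == p then s2^-1 *: (var N p + var N q)
  else if j == q then s2^-1 *: (var N p - var N q) else var N j.
Proof.
move=> hj; rewrite [in LHS](var_ord hj) /hbs comp_mpolyXU -tnth_nth tnth_mktuple /=.
by rewrite -(var_ord hj).
Qed.

Lemma hbs_var_fst p q : (p < N)%N -> hbs N p q (var N p) = s2^-1 *: (var N p + var N q).
Proof. by move=> hp; rewrite hbs_var // eqxx. Qed.

Lemma hbs_var_snd p q : (q < N)%N -> p != q ->
  hbs N p q (var N q) = s2^-1 *: (var N p - var N q).
Proof. by move=> hq /negbTE hpq; rewrite hbs_var // eq_sym hpq eqxx. Qed.

Lemma hbs_var_other p q j : j != p -> j != q -> hbs N p q (var N j) = var N j.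
Proof.
move=> /negbTE hp /negbTE hq; have [hj|hj] := ltnP j N; first by rewrite hbs_var // hp hq.
by rewrite var_out // /hbs rmorph0.
Qed.

Definition endpoints l := unzip1 l ++ unzip2 l.

Lemma uniq_endpoints_cons p q l :
  uniq (endpoints ((p, q) :: l)) =
  [&& p != q, p \notin endpoints l, q \notin endpoints l & uniq (endpoints l)].
Proof.
have /permPl E := perm_catCA (unzip1 l) [:: q] (unzip2 l).
by rewrite /endpoints /= (perm_uniq E) (perm_mem E) inE negb_or -andbA.
Qed.

Lemma apply_hbs_var_other l j : j \notin endpoints l -> apply_hbs N l (var N j) = var N j.
Proof.
elim: l => [//|[p q] l IHl]; rewrite apply_hbs_cons {1}/endpoints /= !(inE, mem_cat).
rewrite !negb_or; case/and4P => jp j1 jq j2.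
by rewrite hbs_var_other // IHl // mem_cat negb_or j1.
Qed.

Lemma apply_hbs_layer l p q : uniq (endpoints l) -> (p, q) \in l ->
  (p < N)%N -> (q < N)%N ->
  apply_hbs N l (var N p) = s2^-1 *: (var N p + var N q) /\
  apply_hbs N l (var N q) = s2^-1 *: (var N p - var N q).
Proof.
elim: l => [//|[p' q'] l IHl]; rewrite uniq_endpoints_cons inE.
move=> /and4P [pq' p'l q'l ul] /orP [/eqP [-> ->]|pql] hp hq.
  rewrite !apply_hbs_cons hbs_var_fst // hbs_var_snd //.
  by rewrite !apply_hbsZ rmorphD rmorphB /= !apply_hbs_var_other.
have [p_l q_l] : p \in unzip1 l /\ q \in unzip2 l.
  by split; [apply: (map_f fst pql) | apply: (map_f snd pql)].
have fresh (j : nat) : j \in endpoints l -> (j != p') && (j != q').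
  by move=> jl; apply/andP; split; apply: contraTneq jl => ->.
have /andP [pp' pq] : (p != p') && (p != q') by apply: fresh; rewrite mem_cat p_l.
have /andP [qp' qq'] : (q != p') && (q != q') by apply: fresh; rewrite mem_cat q_l orbT.
by rewrite !apply_hbs_cons !hbs_var_other //; apply: IHl.
Qed.

Lemma uniq_endpoints_mkseq (f g : nat -> nat) m :
  {in gtn m &, injective f} -> {in gtn m &, injective g} ->
  (forall i j, (i < m)%N -> (j < m)%N -> f i != g j) ->
  uniq (endpoints (mkseq (fun i => (f i, g i)) m)).
Proof.
move=> /mkseq_uniqP f_inj /mkseq_uniqP g_inj fg.
rewrite /endpoints /unzip1 /unzip2 /mkseq -!map_comp cat_uniq f_inj g_inj andbT.
apply/hasPn => _ /mapP [j + ->]; rewrite mem_iota add0n => jm.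
apply/mapP => -[i + /eqP]; rewrite mem_iota add0n => im.
by rewrite eq_sym (negbTE (fg _ _ _ _)).
Qed.

Lemma mem_mkseq_pair (f g : nat -> nat) m i :
  (i < m)%N -> (f i, g i) \in mkseq (fun i => (f i, g i)) m.
Proof. by move=> im; apply: map_f; rewrite mem_iota. Qed.

End Beamsplitters.

Arguments var_ord {N j}.
Arguments apply_hbs_layer {N l p q}.
Arguments mem_mkseq_pair {f g m i}.

Lemma big_ord_pairs (R : Type) (idx : R) (op : Monoid.law idx) n (F : nat -> R) :
  \big[op/idx]_(j < 2 * n) F j = \big[op/idx]_(i < n) op (F (2 * i)%N) (F (2 * i + 1)%N).
Proof.
elim: n => [|n IHn]; first by rewrite !big_ord0.
rewrite (_ : 2 * n.+1 = (2 * n).+2)%N; last by lia.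
by rewrite !big_ord_recr /= IHn Monoid.mulmA addn1.
Qed.

Definition odd_mode (i : nat) : nat := (2 * i + 1)%N.
Definition even_mode (n i : nat) : nat := ((2 * i + 2) %% (2 * n))%N.

Lemma even_modeE n i : (i < n)%N -> even_mode n i = if i.+1 == n then 0%N else (2 * i + 2)%N.
Proof.
move=> ilt; rewrite /even_mode; case: eqP => [<-|ne].
  by rewrite (_ : 2 * i + 2 = 2 * i.+1)%N ?modnn //; lia.
by rewrite modn_small //; lia.
Qed.

Lemma even_mode_lt {n i} : (i < n)%N -> (even_mode n i < 2 * n)%N.
Proof. by move=> ilt; rewrite even_modeE //; case: eqP; lia. Qed.

Lemma even_mode_pred n (i : 'I_n) : even_mode n (ord_pred i) = (2 * i)%N.
Proof.
rewrite even_modeE ?ltn_ord //= /ord_pred /=.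
case: i => [[|i] ilt] /=.
  by rewrite add0n modn_small ?prednK ?eqxx //; lia.
rewrite modnDr modn_small; last by lia.
by case: eqP; lia.
Qed.

Section Network.
Variable n : nat.
Local Notation N := (NN n).

Definition a_even (i : nat) : state N := var N (2 * i).
Definition a_odd (i : nat) : state N := var N (2 * i + 1).
Definition a_det (j : nat) : state N := var N (2 * n + j).

Definition analyzer_plus (i : 'I_n) : state N :=
  s2^-1 *: (a_det (odd_mode i) + a_det (even_mode n i)).
Definition analyzer_minus (i : 'I_n) : state N :=
  s2^-1 *: (a_det (odd_mode i) - a_det (even_mode n i)).

Definition protocol_pairs : seq (nat * nat) :=
  step2_pairs n ++ step3_pairs n ++ analyzer_pairs n.

Lemma pre_measurementE :
  pre_measurement n = apply_hbs N protocol_pairs (input_state n).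
Proof. by rewrite /pre_measurement !apply_hbs_cat. Qed.

Lemma step2_var {i} : (i < n)%N ->
  apply_hbs N (step2_pairs n) (var N (2 * i)) =
    s2^-1 *: (var N (2 * i) + var N (2 * i + 1)) /\
  apply_hbs N (step2_pairs n) (var N (2 * i + 1)) =
    s2^-1 *: (var N (2 * i) - var N (2 * i + 1)).
Proof.
move=> ilt; apply: apply_hbs_layer; rewrite ?mem_mkseq_pair //; try by rewrite /NN; lia.
by apply: uniq_endpoints_mkseq => i1 i2 *; [lia | lia | apply/eqP; lia].
Qed.

Lemma step3_var j : (j < 2 * n)%N ->
  apply_hbs N (step3_pairs n) (var N j) = s2^-1 *: (var N j + var N (2 * n + j)).
Proof.
move=> jlt; have uniq3 : uniq (endpoints (step3_pairs n)).
  by apply: uniq_endpoints_mkseq => i1 i2 *; [lia | lia | apply/eqP; lia].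
have mem3 : (j, 2 * n + j)%N \in step3_pairs n := mem_mkseq_pair jlt.
have jN : (j < N)%N by rewrite /NN; lia.
have jN' : (2 * n + j < N)%N by rewrite /NN; lia.
by have [-> _] := apply_hbs_layer uniq3 mem3 jN jN'.
Qed.

Lemma uniq_endpoints_analyzer : uniq (endpoints (analyzer_pairs n)).
Proof.
apply: (@uniq_endpoints_mkseq (fun i => 2 * n + odd_mode i) (fun i => 2 * n + even_mode n i))%N.
all: move=> i1 i2; rewrite ?inE /= /odd_mode => i1lt i2lt.
- lia.
- by rewrite !even_modeE //; case: eqP; case: eqP; lia.
- by rewrite even_modeE //; apply/eqP; case: eqP; lia.
Qed.

Lemma analyzer_low j : (j < 2 * n)%N -> apply_hbs N (analyzer_pairs n) (var N j) = var N j.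
Proof.
move=> jlt; apply: apply_hbs_var_other; apply/negP.
by rewrite mem_cat => /orP [] /mapP [_ /mapP [i _ ->] /= jE]; lia.
Qed.

Lemma analyzer_det (i : 'I_n) :
  apply_hbs N (analyzer_pairs n) (a_det (odd_mode i)) = analyzer_plus i /\
  apply_hbs N (analyzer_pairs n) (a_det (even_mode n i)) = analyzer_minus i.
Proof.
have ilt := ltn_ord i.
have mem : (2 * n + odd_mode i, 2 * n + even_mode n i)%N \in analyzer_pairs n :=
  mem_mkseq_pair ilt.
apply: (apply_hbs_layer uniq_endpoints_analyzer mem).
- by rewrite /NN /odd_mode; lia.
- by have := even_mode_lt ilt; rewrite /NN; lia.
Qed.

Lemma network_var (i : 'I_n) :
  let u := s2^-1 *: (a_even i + analyzer_minus (ord_pred i)) in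
  let v := s2^-1 *: (a_odd i + analyzer_plus i) in
  apply_hbs N protocol_pairs (a_even i) = s2^-1 *: (u + v) /\
  apply_hbs N protocol_pairs (a_odd i) = s2^-1 *: (u - v).
Proof.
have ilt := ltn_ord i; have [E0 E1] := step2_var ilt.
rewrite /protocol_pairs /a_even /a_odd !apply_hbs_cat E0 E1 !apply_hbsZ rmorphD rmorphB.
rewrite /= !step3_var; try lia.
have [Eodd _] := analyzer_det i; have [_ Eeven] := analyzer_det (ord_pred i).
rewrite /a_det even_mode_pred in Eeven.
rewrite rmorphD rmorphB /= !apply_hbsZ !rmorphD /= Eodd Eeven.
by rewrite !analyzer_low //; lia.
Qed.

End Network.

Arguments analyzer_plus {n}.
Arguments analyzer_minus {n}.
Arguments network_var {n}.

Section Expansion.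
Variable n : nat.
Local Notation N := (NN n).

(* The five parts of s2^-4 ((x + u)^2 - (y + v)^2) that are homogeneous for the
   pair counts of the analyzer modes. *)
Definition factor_term (i : 'I_n) (t : 'I_5) : state N :=
  let x := a_even n i in let y := a_odd n i in
  let u := analyzer_minus (ord_pred i) in let v := analyzer_plus i in
  let q := s2^-1 ^+ 4 in
  match val t with
  | 0 => q *: (x * x - y * y)
  | 1 => (2 * q) *: (x * u)
  | 2 => - (2 * q) *: (y * v)
  | 3 => q *: (u * u)
  | _ => - q *: (v * v)
  end.

Definition xu_term : 'I_5 := @Ordinal 5 1 isT.
Definition yv_term : 'I_5 := @Ordinal 5 2 isT.

Lemma network_pair (i : 'I_n) :
  apply_hbs N (protocol_pairs n) (a_even n i) * apply_hbs N (protocol_pairs n) (a_odd n i) =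
  \sum_(t < 5) factor_term i t.
Proof.
have [-> ->] := network_var i.
rewrite !big_ord_recr big_ord0 /= /factor_term /=.
rewrite -!mul_mpolyC !rmorphM !rmorphN !rmorphXn /= !mpolyC_nat.
ring.
Qed.

Lemma pre_measurement_expand :
  pre_measurement n = \sum_(s : {ffun 'I_n -> 'I_5}) \prod_(i < n) factor_term i (s i).
Proof.
rewrite pre_measurementE /input_state rmorph_prod /=.
rewrite (big_ord_pairs _ _ _ _ (fun j => apply_hbs N (protocol_pairs n) (var N j))).
rewrite -bigA_distr_bigA; apply: eq_bigr => i _.
exact: network_pair.
Qed.

End Expansion.

Arguments factor_term {n}.

Definition graded_pred {N K : nat} {R : ringType} (g : 'X_{1..N} -> 'X_{1..K})
  (D : 'X_{1..K}) : pred {mpoly R[N]} :=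
  fun p => all [pred m | g m == D] (msupp p).
Arguments graded_pred _ _ _ _ _ _ /.

Definition graded {N K : nat} {R : ringType} (g : 'X_{1..N} -> 'X_{1..K})
  (D : 'X_{1..K}) : qualifier 0 {mpoly R[N]} :=
  [qualify p | graded_pred g D p].

Section Graded.
Context (N K : nat) (R : ringType) (g : 'X_{1..N} -> 'X_{1..K}).
Implicit Types (p q : {mpoly R[N]}) (D : 'X_{1..K}).

Lemma gradedP D p : reflect {in msupp p, forall m, g m = D} (p \is graded g D).
Proof. by apply: (iffP allP) => h m /h /= => [/eqP|->]. Qed.

Lemma graded_submod_closed D : submod_closed (graded g D : {pred {mpoly R[N]}}).
Proof.
split=> [|c p q /gradedP gp /gradedP gq]; first by apply/gradedP => m; rewrite msupp0.
by apply/gradedP => m /msuppD_le; rewrite mem_cat => /orP [/msuppZ_le /gp|/gq].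
Qed.

HB.instance Definition _ D :=
  GRing.isSubmodClosed.Build R {mpoly R[N]} (graded_pred g D) (graded_submod_closed D).

Lemma gradedX m : ('X_[m] : {mpoly R[N]}) \is graded g (g m).
Proof. by apply/gradedP => m'; rewrite msuppX inE => /eqP ->. Qed.

Hypothesis gD : {morph g : m1 m2 / (m1 + m2)%MM}.
Hypothesis g0 : g 0%MM = 0%MM.

Lemma gradedM D1 D2 p q :
  p \is graded g D1 -> q \is graded g D2 -> p * q \is graded g (D1 + D2)%MM.
Proof.
move=> /gradedP gp /gradedP gq; apply/gradedP => m /msuppM_le /allpairsP [[m1 m2] /=].
by case=> m1p m2q ->; rewrite gD gp // gq.
Qed.

Lemma graded_prod (I : Type) (r : seq I) (F : I -> {mpoly R[N]}) (Dg : I -> 'X_{1..K}) :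
  (forall i, F i \is graded g (Dg i)) ->
  \prod_(i <- r) F i \is graded g (\sum_(i <- r) Dg i)%MM.
Proof.
move=> gF; elim: r => [|i r IHr]; rewrite ?big_nil ?big_cons; last exact: gradedM.
by rewrite -mpolyX0 -g0 gradedX.
Qed.

End Graded.

Arguments gradedP {N K R g D p}.
Arguments gradedX {N K R g}.
Arguments gradedM {N K R g} gD {D1 D2 p q}.
Arguments graded_prod {N K R g} gD g0 {I r F Dg}.

Section LinearExtension.
Context (N : nat) (R : ringType) (V : lmodType R) (G : 'X_{1..N} -> V).
Implicit Types (p q : {mpoly R[N]}).

Definition mlinext p : V := \sum_(m <- msupp p) p@_m *: G m.

Lemma mlinext_widen s p : uniq s -> {subset msupp p <= s} ->
  mlinext p = \sum_(m <- s) p@_m *: G m.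
Proof.
move=> us sub; rewrite (bigID (mem (msupp p))) /= [X in _ + X]big1 ?addr0; last first.
  by move=> m /memN_msupp_eq0 ->; rewrite scale0r.
rewrite -big_filter; apply: perm_big; apply: uniq_perm; rewrite ?filter_uniq ?msupp_uniq //.
by move=> m; rewrite mem_filter andb_idr //; apply: sub.
Qed.

Lemma mlinext_is_linear : linear mlinext.
Proof.
move=> c p q; pose s := undup (msupp p ++ msupp q).
have us : uniq s := undup_uniq _.
have sp : {subset msupp p <= s} by move=> m mp; rewrite mem_undup mem_cat mp.
have sq : {subset msupp q <= s} by move=> m mq; rewrite mem_undup mem_cat mq orbT.
have spq : {subset msupp (c *: p + q) <= s}.
  by move=> m /msuppD_le; rewrite mem_cat => /orP [/msuppZ_le /sp|/sq].
rewrite !(@mlinext_widen s) // scaler_sumr -big_split /=.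
by apply: eq_bigr => m _; rewrite mcoeffD mcoeffZ scalerDl scalerA.
Qed.

HB.instance Definition _ :=
  GRing.isLinear.Build R {mpoly R[N]} V *:%R mlinext mlinext_is_linear.

Lemma mlinextX m : mlinext 'X_[m] = G m.
Proof. by rewrite /mlinext msuppX big_seq1 mcoeffX eqxx scale1r. Qed.

Lemma mlinext_graded_eq0 K (g : 'X_{1..N} -> 'X_{1..K}) D p :
  p \is graded g D -> (forall m, g m = D -> G m = 0) -> mlinext p = 0.
Proof.
move=> /gradedP gp GD; rewrite /mlinext big1_seq // => m /andP [_ mp].
by rewrite GD ?scaler0 // gp.
Qed.

End LinearExtension.

Arguments mlinext {N R V} G p.
Arguments mlinextX {N R V} G m.
Arguments mlinext_graded_eq0 {N R V G K g D p}.

Definition mnm_at {N} (m : 'X_{1..N}) (j : nat) : nat :=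
  if insub j is Some o then m o else 0%N.

Lemma mnm_atD N j : {morph @mnm_at N ^~ j : m1 m2 / (m1 + m2)%MM >-> (m1 + m2)%N}.
Proof. by move=> m1 m2; rewrite /mnm_at; case: insub => // o; rewrite mnmDE. Qed.

Lemma mnm_at0 N j : mnm_at (0%MM : 'X_{1..N}) j = 0%N.
Proof. by rewrite /mnm_at; case: insub => // o; rewrite mnm0E. Qed.

Lemma mnm_atU N (o : 'I_N) j : mnm_at U_(o)%MM j = (o == j :> nat).
Proof.
rewrite /mnm_at; case: insubP => [o' _ <-|jN]; first by rewrite mnm1E -val_eqE.
by case: eqP => // oj; rewrite -oj ltn_ord in jN.
Qed.

Lemma mnm_at_ord N (m : 'X_{1..N}) (o : 'I_N) : mnm_at m o = m o.
Proof. by rewrite /mnm_at valK. Qed.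

Definition det_sel {n} (i : 'I_n) (b : bool) : nat := if b then odd_mode i else even_mode n i.

Lemma det_sel_lt {n} (i : 'I_n) b : (det_sel i b < 2 * n)%N.
Proof.
by move: (ltn_ord i) (even_mode_lt (ltn_ord i)); rewrite /det_sel /odd_mode; case: b; lia.
Qed.

Section Detection.
Variable n : nat.
Local Notation N := (NN n).

Definition detected (m : 'X_{1..N}) : 'X_{1..2 * n} :=
  [multinom mnm_at m (2 * n + j) | j < 2 * n].

Definition pair_count (m : 'X_{1..N}) : 'X_{1..n} :=
  [multinom mnm_at m (2 * n + odd_mode i) + mnm_at m (2 * n + even_mode n i) | i < n].

Lemma detectedE (m : 'X_{1..N}) (o : 'I_N) (j : 'I_(2 * n)) :
  val o = (2 * n + j)%N -> m o = detected m j.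
Proof. by move=> oj; rewrite mnmE -oj mnm_at_ord. Qed.

Lemma detectedD : {morph detected : m1 m2 / (m1 + m2)%MM}.
Proof. by move=> m1 m2; apply/mnmP => j; rewrite mnmDE !mnmE mnm_atD. Qed.

Lemma detected0 : detected 0%MM = 0%MM.
Proof. by apply/mnmP => j; rewrite mnm0E mnmE mnm_at0. Qed.

Lemma pair_countD : {morph pair_count : m1 m2 / (m1 + m2)%MM}.
Proof. by move=> m1 m2; apply/mnmP => i; rewrite mnmDE !mnmE !mnm_atD; lia. Qed.

Lemma pair_count0 : pair_count 0%MM = 0%MM.
Proof. by apply/mnmP => i; rewrite mnm0E mnmE !mnm_at0. Qed.

Lemma var_low_graded K (g : 'X_{1..N} -> 'X_{1..K}) j :
  (forall o : 'I_N, (o < 2 * n)%N -> g U_(o)%MM = 0%MM) ->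
  (j < 2 * n)%N -> var N j \is graded g 0%MM.
Proof.
move=> g_low jlt; have jN : (j < N)%N by rewrite /NN; lia.
by rewrite (var_ord jN) -(g_low (Ordinal jN)) //; apply: gradedX.
Qed.

Lemma detected_low (o : 'I_N) : (o < 2 * n)%N -> detected U_(o)%MM = 0%MM.
Proof. by move=> olt; apply/mnmP => j; rewrite mnm0E mnmE mnm_atU; case: eqP; lia. Qed.

Lemma pair_count_low (o : 'I_N) : (o < 2 * n)%N -> pair_count U_(o)%MM = 0%MM.
Proof. by move=> olt; apply/mnmP => i; rewrite mnm0E mnmE !mnm_atU; do 2 case: eqP; lia. Qed.

Lemma analyzer_modes (i i' : 'I_n) :
  [/\ (odd_mode i == odd_mode i') = (i == i'), odd_mode i != even_mode n i'
    & (even_mode n i == even_mode n i') = (i == i')].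
Proof.
have ilt := ltn_ord i; have i'lt := ltn_ord i'.
rewrite /odd_mode !even_modeE // -val_eqE /=.
by case: (i.+1 =P n); case: (i'.+1 =P n) => *; split; try (apply/eqP/eqP; lia); lia.
Qed.

Lemma a_det_pair_count (i : 'I_n) b : a_det n (det_sel i b) \is graded pair_count U_(i)%MM.
Proof.
have jN : (2 * n + det_sel i b < N)%N by have := det_sel_lt i b; rewrite /NN; lia.
rewrite /a_det (var_ord jN).
suff <- : pair_count U_(Ordinal jN)%MM = U_(i)%MM by apply: gradedX.
apply/mnmP => i'; rewrite mnm1E mnmE !mnm_atU /= !eqn_add2l.
have [oo oe ee] := analyzer_modes i i'; have [_ oe' _] := analyzer_modes i' i.
rewrite /det_sel; case: {jN} b; first by rewrite oo (negbTE oe) addn0.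
by rewrite ee [_ == odd_mode _]eq_sym (negbTE oe').
Qed.

End Detection.

Arguments pair_count {n}.
Arguments detected {n}.
Arguments var_low_graded {n K g j}.
Arguments detected_low {n}.
Arguments pair_count_low {n}.
Arguments a_det_pair_count {n}.
Arguments analyzer_modes {n}.
Arguments detectedE {n}.

Lemma ordS_closed {n} (P : pred 'I_n) {i} :
  P i -> (forall j, P j -> P (ordS j)) -> forall j, P j.
Proof.
move=> Pi PS j; have iterE t : val (iter t (@ordS n) i) = ((i + t) %% n)%N.
  elim: t => [|t IHt] /=; first by rewrite addn0 modn_small.
  by rewrite IHt -addn1 modnDml addn1 addnS.
have -> : j = iter (j + n - i) (@ordS n) i.
  apply: val_inj; rewrite /= iterE (_ : i + _ = j + n)%N ?modnDr ?modn_small //.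
  by move: (ltn_ord i); lia.
by elim: (j + n - i)%N => //= t; apply: PS.
Qed.

Definition own_deg (t : 'I_5) : nat := nth 0%N [:: 0; 0; 1; 0; 2]%N t.
Definition prev_deg (t : 'I_5) : nat := nth 0%N [:: 0; 1; 0; 2; 0]%N t.

Section TermDegrees.
Variable n : nat.

Definition term_degree (i : 'I_n) (t : 'I_5) : 'X_{1..n} :=
  match val t with
  | 0 => 0
  | 1 => U_(ord_pred i)
  | 2 => U_(i)
  | 3 => U_(ord_pred i) + U_(ord_pred i)
  | _ => U_(i) + U_(i)
  end%MM.

Lemma term_degreeE (i j : 'I_n) t :
  term_degree i t j = (own_deg t * (i == j) + prev_deg t * (ord_pred i == j))%N.
Proof.
case: t => [[|[|[|[|[|t]]]]] tlt]; rewrite /term_degree ?mnm0E ?mnmDE ?mnm1E /=;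
  by rewrite ?(mul0n, mul1n, add0n, addn0, mul2n, addnn).
Qed.

Lemma factor_term_graded (i : 'I_n) t :
  factor_term i t \is graded pair_count (term_degree i t).
Proof.
have gM D1 D2 D (p q : state (NN n)) : p \is graded pair_count D1 ->
    q \is graded pair_count D2 -> D = (D1 + D2)%MM -> p * q \is graded pair_count D.
  by move=> gp gq ->; apply: (gradedM (@pair_countD n)).
have ilt := ltn_ord i.
have gx : a_even n i \is graded pair_count 0%MM.
  by apply: (var_low_graded pair_count_low); lia.
have gy : a_odd n i \is graded pair_count 0%MM.
  by apply: (var_low_graded pair_count_low); lia.
have gu : analyzer_minus (ord_pred i) \is graded pair_count U_(ord_pred i)%MM.
  by rewrite rpredZ // rpredB // (a_det_pair_count _ true, a_det_pair_count _ false).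
have gv : analyzer_plus i \is graded pair_count U_(i)%MM.
  by rewrite rpredZ // rpredD // (a_det_pair_count _ true, a_det_pair_count _ false).
case: t => [[|[|[|[|[|t]]]]] tlt] //; rewrite /factor_term /term_degree /=; apply: rpredZ.
- by rewrite rpredB // (gM _ _ _ _ _ gx gx, gM _ _ _ _ _ gy gy) // addm0.
- by apply: (gM _ _ _ _ _ gx gu); rewrite add0m.
- by apply: (gM _ _ _ _ _ gy gv); rewrite add0m.
- exact: (gM _ _ _ _ _ gu gu).
- exact: (gM _ _ _ _ _ gv gv).
Qed.

Lemma sum_term_degree (s : 'I_n -> 'I_5) (j : 'I_n) :
  (\sum_(i < n) term_degree i (s i))%MM j = (own_deg (s j) + prev_deg (s (ordS j)))%N.
Proof.
rewrite mnm_sumE (eq_bigr _ (fun i _ => term_degreeE i j (s i))) big_split /=.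
rewrite (bigD1 j) //= eqxx big1 => [|i /negbTE -> //]; last by rewrite muln0.
rewrite (bigD1 (ordS j)) //= ordSK eqxx big1 => [|i ij]; first by rewrite !muln1 !addn0.
by rewrite (can2_eq (@ord_predK n) (@ordSK n)) (negbTE ij) muln0.
Qed.

Lemma cyclic_term_choice (s : 'I_n -> 'I_5) :
  (forall j, own_deg (s j) + prev_deg (s (ordS j)) = 1)%N ->
  (forall i, val (s i) = 1%N) \/ (forall i, val (s i) = 2%N).
Proof.
move=> deg1; case: (pickP (fun i => val (s i) == 1%N)) => [i0 /= s1|none].
  left => i; apply/eqP; apply: (ordS_closed (fun i => val (s i) == 1%N) s1).
  move=> j /eqP sj; move: (deg1 j).
  by rewrite /own_deg sj; case: (s (ordS j)) => [[|[|[|[|[|?]]]]] ?].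
right => j; move: (deg1 j) (none (ordS j)); rewrite /own_deg /prev_deg.
by case: (s j) => [[|[|[|[|[|?]]]]] ?]; case: (s (ordS j)) => [[|[|[|[|[|?]]]]] ?].
Qed.

End TermDegrees.

Arguments term_degree {n}.
Arguments factor_term_graded {n}.
Arguments sum_term_degree {n}.
Arguments cyclic_term_choice {n}.

Definition measure_monomial (n : nat) (k : nat -> nat) (m : 'X_{1..NN n}) : state (NN n) :=
  if [forall j : 'I_(NN n), (2 * n <= j)%N ==> (m j == k (j - 2 * n)%N)]
  then 'X_[[multinom (if (i < 2 * n)%N then m i else 0%N) | i < NN n]] else 0.

Lemma measure_highE n k P : measure_high n k P = mlinext (measure_monomial n k) P.
Proof.
rewrite /measure_high big_mkcond; apply: eq_bigr => m _.
by rewrite /measure_monomial; case: ifP; rewrite ?scaler0.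
Qed.

Section Measurement.
Variables (n : nat) (k : nat -> nat).
Local Notation N := (NN n).
Local Notation measure := (mlinext (measure_monomial n k)).

Definition detector_counts : 'X_{1..2 * n} := [multinom k j | j < 2 * n].

Lemma measured_exponent m j : measure_monomial n k m != 0 -> (j < 2 * n)%N ->
  mnm_at m (2 * n + j) = k j.
Proof.
rewrite /measure_monomial; case: ifP => [/forallP accepted _ jlt|]; last by rewrite eqxx.
have jN : (2 * n + j < N)%N by rewrite /NN; lia.
move: (accepted (Ordinal jN)); rewrite -[(2 * n + j)%N]/(val (Ordinal jN)) mnm_at_ord /=.
by rewrite leq_addr addKn => /eqP.
Qed.

Lemma measure_graded_detected D p :
  p \is graded detected D -> D != detector_counts -> measure p = 0.
Proof.
move=> gp Dk; apply: (mlinext_graded_eq0 gp) => m mD; apply/eqP.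
apply: contraTT Dk => Gm; rewrite negbK -mD; apply/eqP/mnmP => j.
by rewrite !mnmE measured_exponent.
Qed.

Hypothesis success : analyzer_success n k.

Definition one_per_pair : 'X_{1..n} := [multinom 1%N | i < n].

Lemma measure_graded_pair_count D p :
  p \is graded pair_count D -> D != one_per_pair -> measure p = 0.
Proof.
move=> gp Dk; apply: (mlinext_graded_eq0 gp) => m mD; apply/eqP.
apply: contraTT Dk => Gm; rewrite negbK -mD; apply/eqP/mnmP => i.
have ilt := ltn_ord i.
by rewrite !mnmE !measured_exponent ?success ?(even_mode_lt ilt) // /odd_mode; lia.
Qed.

Lemma measure_pre_measurement_split : (0 < n)%N ->
  measure (pre_measurement n) =
  measure (\prod_(i < n) factor_term i xu_term) + measure (\prod_(i < n) factor_term i yv_term).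
Proof.
move=> n_gt0; rewrite pre_measurement_expand raddf_sum /=.
rewrite (bigD1 [ffun => xu_term]) // (bigD1 [ffun => yv_term]) /=; last first.
  by apply/eqP => /ffunP /(_ (Ordinal n_gt0)); rewrite !ffunE.
rewrite [X in _ + (_ + X)]big1 ?addr0; last first.
  move=> s /andP [s_xu s_yv].
  apply: (measure_graded_pair_count _ _
    (graded_prod (@pair_countD n) (pair_count0 n) (fun i => factor_term_graded i (s i)))).
  apply/eqP => /mnmP deg1.
  have own_prev j : (own_deg (s j) + prev_deg (s (ordS j)) = 1)%N.
    by rewrite -sum_term_degree deg1 mnmE.
  have [c|c] := cyclic_term_choice s own_prev.
  - by move/eqP: s_xu; apply; apply/ffunP => i; rewrite ffunE; apply: val_inj; rewrite c.
  - by move/eqP: s_yv; apply; apply/ffunP => i; rewrite ffunE; apply: val_inj; rewrite c.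
by congr (_ + _); congr measure; apply: eq_bigr => i _; rewrite ffunE.
Qed.

Lemma det_ord_subproof (i : 'I_n) b : (2 * n + det_sel i b < N)%N.
Proof. by have := det_sel_lt i b; rewrite /NN; lia. Qed.

Definition det_ord (i : 'I_n) b : 'I_N := Ordinal (det_ord_subproof i b).

Definition choice_mnm (t : {ffun 'I_n -> bool}) : 'X_{1..N} :=
  (\sum_(i < n) U_(det_ord i (t i)))%MM.

Lemma prod_a_det (t : {ffun 'I_n -> bool}) :
  \prod_(i < n) a_det n (det_sel i (t i)) = 'X_[choice_mnm t].
Proof.
rewrite /choice_mnm (big_morph _ (@mpolyXD _ _) (@mpolyX0 _ _)).
by apply: eq_bigr => i _; rewrite /a_det (var_ord (det_ord_subproof i (t i))).
Qed.

Lemma choice_mnm_low (t : {ffun 'I_n -> bool}) (o : 'I_N) :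
  (o < 2 * n)%N -> choice_mnm t o = 0%N.
Proof.
move=> olt; rewrite mnm_sumE big1 // => i _; rewrite mnm1E.
by case: eqP => // /(congr1 val) /=; lia.
Qed.

Lemma det_sel_eq (i i' : 'I_n) b b' :
  (det_sel i b == det_sel i' b') = (i == i') && (b == b').
Proof.
have [oo oe ee] := analyzer_modes i i'; have [_ eo _] := analyzer_modes i' i.
case: b; case: b'; rewrite /det_sel ?oo ?ee ?andbT ?andbF //; apply/negbTE => //.
by rewrite eq_sym.
Qed.

Lemma detected_choice (t : {ffun 'I_n -> bool}) (i : 'I_n) b :
  detected (choice_mnm t) (Ordinal (det_sel_lt i b)) = (t i == b).
Proof.
rewrite mnmE /choice_mnm (big_morph _ (mnm_atD _ _) (mnm_at0 _ _)).
under eq_bigr do rewrite mnm_atU /= eqn_add2l det_sel_eq.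
by rewrite (bigD1 i) //= eqxx big1 ?addn0 // => i' /negbTE ->.
Qed.

Lemma det_sel_cover (j : 'I_(2 * n)) : exists (i : 'I_n) b, val j = det_sel i b.
Proof.
have jlt := ltn_ord j; have hj := odd_double_half j; rewrite -muln2 in hj.
have ilt : (j./2 < n)%N by lia.
have [jodd|jeven] := boolP (odd j).
  by exists (Ordinal ilt), true; rewrite /det_sel /odd_mode /=; rewrite jodd in hj; lia.
exists (ord_pred (Ordinal ilt)), false; rewrite /det_sel even_mode_pred /=.
by rewrite (negbTE jeven) in hj; lia.
Qed.

Definition k_choice : {ffun 'I_n -> bool} := [ffun i : 'I_n => k (odd_mode i) == 1%N].

Lemma k_det_sel (i : 'I_n) b : k (det_sel i b) = (k_choice i == b).
Proof.
have : (k (odd_mode i) + k (even_mode n i) = 1)%N := success _ (ltn_ord i).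
rewrite /det_sel ffunE.
by case: b; case: (k (odd_mode i)) => [|[|?]] /=; lia.
Qed.

Lemma detected_choice_counts t : (detected (choice_mnm t) == detector_counts) = (t == k_choice).
Proof.
apply/eqP/eqP => [dk|->]; last first.
  apply/mnmP => j; have [i [b jE]] := det_sel_cover j.
  rewrite (_ : j = Ordinal (det_sel_lt i b)); last exact: val_inj.
  by rewrite detected_choice mnmE k_det_sel.
apply/ffunP => i; move/mnmP: dk => /(_ (Ordinal (det_sel_lt i true))).
by rewrite detected_choice mnmE k_det_sel !eqb_id; case: (t i); case: (k_choice i).
Qed.

Lemma measure_mulX W M : W \is graded detected 0%MM -> detected M = detector_counts ->
  (forall o : 'I_N, (o < 2 * n)%N -> M o = 0%N) -> measure (W * 'X_[M]) = W.
Proof.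
move=> /gradedP W_low dM M_low.
rewrite {1}[W]mpolyE mulr_suml raddf_sum /= [RHS]mpolyE; apply: eq_big_seq => w wW.
rewrite -scalerAl linearZ /= -mpolyXD mlinextX.
have high (m : 'X_{1..N}) (o : 'I_N) : (2 * n <= o)%N ->
    exists j : 'I_(2 * n), m o = detected m j /\ val j = (o - 2 * n)%N.
  move=> ho; have jlt : (o - 2 * n < 2 * n)%N by move: (ltn_ord o); rewrite /NN; lia.
  by exists (Ordinal jlt); split => //; apply: detectedE => /=; lia.
have w_low (o : 'I_N) : (2 * n <= o)%N -> w o = 0%N.
  by move=> ho; have [j [-> _]] := high w o ho; rewrite W_low // mnm0E.
rewrite /measure_monomial ifT.
  suff -> : [multinom (if (i < 2 * n)%N then (w + M)%MM i else 0%N) | i < N] = w by [].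
  apply/mnmP => o; rewrite mnmE mnmDE.
  by case: ltnP => ho; [rewrite M_low ?addn0 | rewrite w_low].
apply/forallP => o; apply/implyP => ho; rewrite mnmDE w_low // add0n.
by have [j [-> jE]] := high M o ho; rewrite dM mnmE jE.
Qed.

Lemma measure_pairs W (alpha beta : 'I_n -> algC) : W \is graded detected 0%MM ->
  measure (W * \prod_(i < n)
    (alpha i *: a_det n (odd_mode i) + beta i *: a_det n (even_mode n i))) =
  (\prod_(i < n) (if k (odd_mode i) == 1%N then alpha i else beta i)) *: W.
Proof.
move=> W_low; pose gamma i (b : bool) := if b then alpha i else beta i.
have pairE i : alpha i *: a_det n (odd_mode i) + beta i *: a_det n (even_mode n i) =
    \sum_(b : bool) gamma i b *: a_det n (det_sel i b) by rewrite big_bool.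
have termE (t : {ffun 'I_n -> bool}) :
    W * \prod_(i < n) (gamma i (t i) *: a_det n (det_sel i (t i))) =
    (\prod_(i < n) gamma i (t i)) *: (W * 'X_[choice_mnm t]).
  by rewrite scaler_prod -scalerAr prod_a_det.
rewrite (eq_bigr _ (fun i _ => pairE i)) bigA_distr_bigA mulr_sumr raddf_sum /=.
rewrite (bigD1 k_choice) //= [X in _ + X]big1 ?addr0 => [|t t_k]; rewrite termE linearZ /=.
  have dk : detected (choice_mnm k_choice) = detector_counts.
    by apply/eqP; rewrite detected_choice_counts.
  rewrite measure_mulX //; last exact: choice_mnm_low.
  by congr (_ *: _); apply: eq_bigr => i _; rewrite ffunE; case: eqP.
have gX := gradedM (@detectedD n) W_low (gradedX (choice_mnm t) : 'X_[_] \is graded detected _).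
by rewrite (measure_graded_detected _ _ gX) ?scaler0 // add0m detected_choice_counts.
Qed.

End Measurement.

Arguments measure_pairs {n k} success W alpha beta.
Arguments measure_pre_measurement_split {n k} success.

Lemma low_prod_graded n (f : 'I_n -> nat) : (forall i, f i < 2 * n)%N ->
  \prod_(i < n) var (NN n) (f i) \is graded detected 0%MM.
Proof.
move=> f_low; have := graded_prod (r := index_enum 'I_n) (Dg := fun=> 0%MM)
  (@detectedD n) (detected0 n) (fun i => var_low_graded detected_low (f_low i)).
by rewrite big1_eq.
Qed.

Lemma s_odd_pairs n k : s_odd n k = (\sum_(i < n) k (odd_mode i))%N.
Proof.
rewrite /s_odd big_mkcond (big_ord_pairs _ _ _ _ (fun j => if odd j then k j else 0%N)) /=.
by apply: eq_bigr => i _; rewrite oddD !oddM.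
Qed.

Section Output.
Variables (n : nat) (k : nat -> nat).
Hypotheses (success : analyzer_success n k) (n_gt0 : (0 < n)%N).
Local Notation N := (NN n).
Local Notation measure := (mlinext (measure_monomial n k)).
Local Notation X := (\prod_(i < n) a_even n i).
Local Notation Y := (\prod_(i < n) a_odd n i).

Lemma measure_xu_terms :
  measure (\prod_(i < n) factor_term i xu_term) =
  ((2 * s2^-1 ^+ 4) ^+ n *
   \prod_(i < n) (if k (odd_mode i) == 1%N then s2^-1 else - s2^-1)) *: X.
Proof.
have -> : \prod_(i < n) factor_term i xu_term =
    (2 * s2^-1 ^+ 4) ^+ n *: (X * \prod_(i < n) analyzer_minus i).
  rewrite /factor_term /= scaler_prod prodr_const card_ord big_split /=.
  by rewrite [\prod_(i < n) analyzer_minus i](reindex_inj (@ord_pred_inj n)).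
rewrite linearZ /= -scalerA; congr (_ *: _).
have -> : \prod_(i < n) analyzer_minus i = \prod_(i < n)
    (s2^-1 *: a_det n (odd_mode i) + (- s2^-1) *: a_det n (even_mode n i)).
  by apply: eq_bigr => i _; rewrite /analyzer_minus scalerBr scaleNr.
by apply: measure_pairs => //; apply: low_prod_graded => i; move: (ltn_ord i); lia.
Qed.

Lemma measure_yv_terms :
  measure (\prod_(i < n) factor_term i yv_term) = ((- (2 * s2^-1 ^+ 4)) ^+ n * s2^-1 ^+ n) *: Y.
Proof.
have -> : \prod_(i < n) factor_term i yv_term =
    (- (2 * s2^-1 ^+ 4)) ^+ n *: (Y * \prod_(i < n) analyzer_plus i).
  by rewrite /factor_term /= scaler_prod prodr_const card_ord big_split.
rewrite linearZ /= -scalerA; congr (_ *: _).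
have -> : \prod_(i < n) analyzer_plus i = \prod_(i < n)
    (s2^-1 *: a_det n (odd_mode i) + s2^-1 *: a_det n (even_mode n i)).
  by apply: eq_bigr => i _; rewrite /analyzer_plus scalerDr.
rewrite measure_pairs //; last by apply: low_prod_graded => i; move: (ltn_ord i); lia.
by rewrite (eq_bigr (fun _ => s2^-1)) ?prodr_const ?card_ord // => i _; case: ifP.
Qed.

Lemma prod_sign :
  \prod_(i < n) (if k (odd_mode i) == 1%N then s2^-1 else - s2^-1) =
  (-1) ^+ n * (-1) ^+ s_odd n k * s2^-1 ^+ n.
Proof.
rewrite (eq_bigr (fun i : 'I_n => (-1) * (-1) ^+ k (odd_mode i) * s2^-1)); last first.
  move=> i _; have : (k (odd_mode i) + k (even_mode n i) = 1)%N := success _ (ltn_ord i).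
  case: (k (odd_mode i)) => [|[|?]] //= _.
  - by rewrite expr0 mulr1 mulN1r.
  - by rewrite expr1 mulrNN !mul1r.
rewrite !big_split /= !prodr_const card_ord s_odd_pairs.
by rewrite (big_morph _ (exprD (-1)) (expr0 (-1))).
Qed.

Lemma measure_high_pre_measurement :
  measure_high n k (pre_measurement n) =
  ((- (2 * s2^-1 ^+ 4)) ^+ n * s2^-1 ^+ n) *: ((-1) ^+ s_odd n k *: X + Y).
Proof.
rewrite measure_highE measure_pre_measurement_split //.
rewrite measure_xu_terms measure_yv_terms prod_sign.
rewrite (exprNn (2 * s2^-1 ^+ 4)) scalerDr !scalerA; congr (_ *: _ + _ *: _); ring.
Qed.

End Output.

Section PhaseFlip.
Variable N : nat.

Lemma phase_flipZ c (P : state N) : phase_flip N 1 (c *: P) = c *: phase_flip N 1 P.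
Proof. exact: comp_mpolyZ. Qed.

Lemma phase_flipD (P Q : state N) :
  phase_flip N 1 (P + Q) = phase_flip N 1 P + phase_flip N 1 Q.
Proof. exact: comp_mpolyD. Qed.

Lemma phase_flip_prod (I : Type) (r : seq I) (F : I -> state N) :
  phase_flip N 1 (\prod_(i <- r) F i) = \prod_(i <- r) phase_flip N 1 (F i).
Proof. exact: rmorph_prod. Qed.

Lemma phase_flip_var j : (1 < N)%N ->
  phase_flip N 1 (var N j) = if j == 1%N then - var N 1 else var N j.
Proof.
move=> N_gt1; have [jN|Nj] := ltnP j N.
  rewrite [in LHS](var_ord jN) /phase_flip comp_mpolyXU -tnth_nth tnth_mktuple /=.
  by case: ifP => // _; rewrite -(var_ord jN).
by rewrite var_out // /phase_flip rmorph0; case: eqP => // j1; rewrite j1 in Nj; lia.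
Qed.

End PhaseFlip.

Lemma phase_flip_outputs {n} : (0 < n)%N ->
  phase_flip (NN n) 1 (\prod_(i < n) a_even n i) = \prod_(i < n) a_even n i /\
  phase_flip (NN n) 1 (\prod_(i < n) a_odd n i) = - \prod_(i < n) a_odd n i.
Proof.
case: n => // n _; have N_gt1 : (1 < NN n.+1)%N by rewrite /NN; lia.
rewrite !phase_flip_prod /a_even /a_odd.
split; first by apply: eq_bigr => i _; rewrite phase_flip_var //; case: eqP => //; lia.
rewrite !big_ord_recl phase_flip_var //= mulNr; congr (- (_ * _)).
by apply: eq_bigr => i _; rewrite phase_flip_var //; case: eqP => //; rewrite /bump; lia.
Qed.

Theorem lemma3 (n : nat) (hn : (3 <= n)%N) (k : nat -> nat) :
  analyzer_success n k ->
  protocol_output n k != 0 ->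
  exists c : algC, c != 0 /\ protocol_output n k = c *: B_plus n.
Proof.
move=> success output_nz; have n_gt0 : (0 < n)%N by lia.
suff [c output_c] : exists c : algC, protocol_output n k = c *: B_plus n.
  by exists c; split=> //; apply: contraNneq output_nz => c0; rewrite output_c c0 scale0r.
have s2_nz : s2 != 0 by rewrite sqrtC_eq0 pnatr_eq0.
have [flipX flipY] := phase_flip_outputs n_gt0.
set c0 := (- (2 * s2^-1 ^+ 4)) ^+ n * s2^-1 ^+ n.
exists (c0 * (-1) ^+ s_odd n k * s2).
rewrite /protocol_output /= measure_high_pre_measurement // /B_plus scalerA mulfK //.
rewrite -signr_odd; case: odd; rewrite ?expr1 ?expr0.
  by rewrite phase_flipZ phase_flipD phase_flipZ flipX flipY -[in RHS]scalerA !scaleN1r opprD.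
by rewrite scale1r mulr1.
Qed.
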